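(* Let $M$ be a countably based semigroup in the category $\mathrm{Cu}$ which is an interpolation semigroup, and let $X$ be a finite dimensional compact metric space. Then $\mathrm{Lsc}(X,M)$ is an interpolation semigroup.
   Context: In a partially ordered abelian semigroup $M$, $a\ll b$ (compact containment) means: for every increasing sequence $(b_n)$ whose supremum exists and satisfies $b\le\sup b_n$, there is $n$ with $a\le b_n$. The category $\mathrm{Cu}$ consists of partially ordered abelian semigroups $M$ in which every increasing sequence has a supremum, every element is the supremum of a sequence $(a_n)$ with $a_n\ll a_{n+1}$, and $\ll$ and suprema of increasing sequences are compatible with addition. $M$ is countably based if there is a countable subset $B\subseteq M$ such that whenever $a'\ll a$ in $M$ there is $b\in B$ with $a'\le b\ll a$. $M$ is an interpolation semigroup if whenever $a_i\le b_j$ ($i,j=1,2$) there is $c\in M$ with $a_i\le c\le b_j$ for all $i,j$. $\mathrm{Lsc}(X,M)$ is the set of maps $f\colon X\to M$ such that $\{t\in X: a\ll f(t)\}$ is open for every $a\in M$, with pointwise addition and order. Dimension is covering dimension. *)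

From HB Require Import structures.
From mathcomp Require Import all_boot all_order all_algebra.
From mathcomp Require Import all_classical all_reals all_analysis.
Set Implicit Arguments. Unset Strict Implicit. Unset Printing Implicit Defensive.
Import Order.TTheory GRing.Theory Num.Theory.
Local Open Scope classical_set_scope.

Section CuDefs.
Variables (M : Type) (add : M -> M -> M) (le : M -> M -> Prop).

Definition incr_seq (b : nat -> M) : Prop := forall n, le (b n) (b n.+1).

Definition is_sup (b : nat -> M) (s : M) : Prop :=
  (forall n, le (b n) s) /\ (forall u, (forall n, le (b n) u) -> le s u).

Definition way_below (a b : M) : Prop :=
  forall (bn : nat -> M) (s : M), incr_seq bn -> is_sup bn s -> le b s ->
  exists n, le a (bn n).

Definition po_ab_semigroup : Prop :=
  [/\ (forall a, le a a),
      (forall a b, le a b -> le b a -> a = b) &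
      (forall a b c, le a b -> le b c -> le a c)] /\
  [/\ (forall a b c, add a (add b c) = add (add a b) c),
      (forall a b, add a b = add b a) &
      (forall a b c, le a b -> le (add a c) (add b c))].

Definition is_Cu : Prop :=
  [/\ po_ab_semigroup,
      (forall b, incr_seq b -> exists s, is_sup b s),
      (forall a, exists an : nat -> M,
          (forall n, way_below (an n) (an n.+1)) /\ is_sup an a),
      (forall a1 b1 a2 b2, way_below a1 b1 -> way_below a2 b2 ->
          way_below (add a1 a2) (add b1 b2)) &
      (forall (an bn : nat -> M) a b, incr_seq an -> incr_seq bn ->
          is_sup an a -> is_sup bn b ->
          is_sup (fun n => add (an n) (bn n)) (add a b))].

(* countable subset B (enumerated, possibly with gaps) *)
Definition countably_based : Prop :=
  exists B : nat -> option M,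
    forall a' a, way_below a' a ->
      exists n b, B n = Some b /\ le a' b /\ way_below b a.

Definition interpolation : Prop :=
  forall a1 a2 b1 b2, le a1 b1 -> le a1 b2 -> le a2 b1 -> le a2 b2 ->
    exists c, [/\ le a1 c, le a2 c, le c b1 & le c b2].
End CuDefs.

Definition lsc (X : topologicalType) (M : Type) (le : M -> M -> Prop)
  (f : X -> M) : Prop :=
  forall a : M, open [set t | way_below le a (f t)].

Definition lsc_interpolation (X : topologicalType) (M : Type)
  (le : M -> M -> Prop) : Prop :=
  forall f1 f2 g1 g2 : X -> M,
    lsc le f1 -> lsc le f2 -> lsc le g1 -> lsc le g2 ->
    (forall t, le (f1 t) (g1 t)) -> (forall t, le (f1 t) (g2 t)) ->
    (forall t, le (f2 t) (g1 t)) -> (forall t, le (f2 t) (g2 t)) ->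
    exists h : X -> M, lsc le h /\
      forall t, [/\ le (f1 t) (h t), le (f2 t) (h t),
                    le (h t) (g1 t) & le (h t) (g2 t)].

Definition covering_dim_le (X : topologicalType) (n : nat) : Prop :=
  forall (k : nat) (U : 'I_k -> set X),
    (forall i, open (U i)) -> (forall x, exists i, U i x) ->
    exists (m : nat) (V : 'I_m -> set X),
      [/\ (forall j, open (V j)),
          (forall x, exists j, V j x),
          (forall j, exists i, V j `<=` U i) &
          (forall x (J : {set 'I_m}), (forall j, j \in J -> V j x) ->
             (#|J| <= n.+1)%N)].

Definition finite_dimensional (X : topologicalType) : Prop :=
  exists n : nat, covering_dim_le X n.

From HB Require Import structures.
From mathcomp Require Import all_boot all_order all_algebra.
From mathcomp Require Import all_classical all_reals all_analysis.
From Stdlib Require List.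
Local Open Scope classical_set_scope.
Set Implicit Arguments. Unset Strict Implicit.

(* A quadruple (a1, a2, b1, b2) encodes the interpolation problem
   a1, a2 <= x <= b1, b2.  Since M is countably based, countably many
   admissible quadruples D q built from the base lie densely (for <<) below
   every admissible one, and repeated finite Riesz interpolation picks
   solutions c q that are monotone for the componentwise order of the D q.
   For the problem X(t) = (f1 t, f2 t, g1 t, g2 t) put
   h t = sup {c q | D q << X(t)}, a directed supremum attained along a
   cofinal chain.  Then h solves X(t) pointwise, and it is lower
   semicontinuous: a << h t gives a << c q for some D q << X(t), which is an
   open condition in t. *)

Section WayBelow.
Variables (M : Type) (le : M -> M -> Prop).
Hypotheses (le_refl : forall a, le a a)
           (le_trans : forall a b c, le a b -> le b c -> le a c).

Lemma way_below_le a b : way_below le a b -> le a b.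
Proof.
by move=> ab; have [n] := ab (fun=> b) b (fun=> le_refl b)
  (conj (fun=> le_refl b) (fun u bu => bu 0%N)) (le_refl b).
Qed.

Lemma le_way_below_trans a b c :
  le a b -> way_below le b c -> way_below le a c.
Proof.
move=> ab bc bn s bn_incr bn_s cs; have [n bbn] := bc bn s bn_incr bn_s cs.
by exists n; apply: le_trans ab bbn.
Qed.

Lemma way_below_le_trans a b c :
  way_below le a b -> le b c -> way_below le a c.
Proof. by move=> ab bc bn s bn_incr bn_s cs; apply: ab bn_incr bn_s (le_trans bc cs). Qed.

Lemma incr_seq_le (b : nat -> M) m n :
  incr_seq le b -> (m <= n)%N -> le (b m) (b n).
Proof.
move=> b_incr /subnK <-; elim: (n - m)%N => [|k IHk]; first exact: le_refl.
by rewrite addSn; apply: le_trans IHk (b_incr _).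
Qed.

Hypothesis approx : forall a, exists an : nat -> M,
  (forall n, way_below le (an n) (an n.+1)) /\ is_sup le an a.

Lemma way_below_approx a : exists an : nat -> M,
  [/\ forall n, way_below le (an n) (an n.+1), is_sup le an a,
      forall n, way_below le (an n) a & incr_seq le an].
Proof.
have [an [an_wb [an_ub an_lub]]] := approx a; exists an; split => //.
- by move=> n; apply: way_below_le_trans (an_wb n) (an_ub n.+1).
- by move=> n; apply: way_below_le.
Qed.

Lemma way_below_interpolate a b :
  way_below le a b -> exists2 c, way_below le a c & way_below le c b.
Proof.
move=> ab; have [bn [bn_wb bn_sup bn_b bn_incr]] := way_below_approx b.
have [n abn] := ab bn b bn_incr bn_sup (le_refl b).
by exists (bn n.+1); [apply: le_way_below_trans abn (bn_wb n)|].
Qed.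

Lemma way_below_directed u v a : way_below le u a -> way_below le v a ->
  exists w, [/\ le u w, le v w & way_below le w a].
Proof.
move=> ua va; have [an [_ an_sup an_a an_incr]] := way_below_approx a.
have [m uam] := ua an a an_incr an_sup (le_refl a).
have [n van] := va an a an_incr an_sup (le_refl a).
exists (an (maxn m n)); split => //.
- by apply: le_trans uam (incr_seq_le an_incr (leq_maxl m n)).
- by apply: le_trans van (incr_seq_le an_incr (leq_maxr m n)).
Qed.

Lemma way_below_exists a : exists w, way_below le w a.
Proof. by have [an [_ _ an_a _]] := way_below_approx a; exists (an 0%N). Qed.

Lemma le_of_way_below a b : (forall x, way_below le x a -> le x b) -> le a b.
Proof.
move=> ab; have [an [_ [_ an_lub] an_a _]] := way_below_approx a.
by apply: an_lub => n; apply: ab.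
Qed.

End WayBelow.

Section FiniteInterpolation.
Variables (M : Type) (le : M -> M -> Prop).
Hypotheses (le_refl : forall a, le a a)
           (le_trans : forall a b c, le a b -> le b c -> le a c)
           (interp : interpolation le).

Lemma interpolation_pair_seq l1 l2 u0 (us : list M) :
  (forall u, List.In u (u0 :: us) -> le l1 u /\ le l2 u) ->
  exists c, [/\ le l1 c, le l2 c & forall u, List.In u (u0 :: us) -> le c u].
Proof.
elim: us => [|u us IHus] lu.
  have [l1u0 l2u0] := lu u0 (or_introl erefl).
  have [c [l1c l2c cu0 _]] := interp l1u0 l1u0 l2u0 l2u0.
  by exists c; split => // u [<-|[]].
have [c' [l1c' l2c' c'u]] : exists c', [/\ le l1 c', le l2 c' &
    forall v, List.In v (u0 :: us) -> le c' v].
  by apply: IHus => v [<-|v_us]; apply: lu; [left|right; right].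
have [l1u l2u] := lu u (or_intror (or_introl erefl)).
have [c [l1c l2c cu cc']] := interp l1u l1c' l2u l2c'.
exists c; split => // v [<-|[<-|v_us]] //.
- by apply: le_trans cc' (c'u _ (or_introl erefl)).
- by apply: le_trans cc' (c'u _ (or_intror v_us)).
Qed.

Lemma interpolation_seq l0 u0 (ls us : list M) :
  (forall l u, List.In l (l0 :: ls) -> List.In u (u0 :: us) -> le l u) ->
  exists c, (forall l, List.In l (l0 :: ls) -> le l c) /\
            (forall u, List.In u (u0 :: us) -> le c u).
Proof.
elim: ls => [|l ls IHls] lu.
  by exists l0; split => [l [<-|[]]|u]; [apply: le_refl|apply: lu; left].
have [c' [lc' c'u]] : exists c', (forall l', List.In l' (l0 :: ls) -> le l' c') /\
    (forall u, List.In u (u0 :: us) -> le c' u).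
  by apply: IHls => l' u [<-|l'_ls]; apply: lu; [left|right; right].
have [|c [lc c'c cu]] := interpolation_pair_seq (l1 := l) (l2 := c') (u0 := u0) (us := us).
  by move=> u u_us; split; [apply: lu => //; right; left|apply: c'u].
exists c; split => // l' [<-|[<-|l'_ls]] //.
- by apply: le_trans (lc' _ (or_introl erefl)) c'c.
- by apply: le_trans (lc' _ (or_intror l'_ls)) c'c.
Qed.

End FiniteInterpolation.

Lemma directed_cofinal_chain (S : nat -> Prop) (r : nat -> nat -> Prop) q0 :
  S q0 -> (forall p q, S p -> S q -> exists s, [/\ S s, r p s & r q s]) ->
  exists qs : nat -> nat, [/\ forall n, S (qs n), forall n, r (qs n) (qs n.+1) &
                              forall k, S k -> r k (qs k.+1)].
Proof.
move=> Sq0 S_dir.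
have /choice[up upP] : forall pq : nat * nat, exists s,
    S pq.1 -> S pq.2 -> [/\ S s, r pq.1 s & r pq.2 s].
  move=> [p q]; have [[Sp Sq]|nSpq] := pselect (S p /\ S q).
    by have [s] := S_dir p q Sp Sq; exists s.
  by exists q0 => Sp Sq; case: nSpq.
(* step [k] also absorbs the index [k] itself, which makes the chain cofinal *)
pose qs := fix qs n := if n is k.+1 then
  up (qs k, if `[< S k >] then k else qs k) else q0.
have qs_next n : S (qs n) -> S (qs n.+1) /\ r (qs n) (qs n.+1).
  move=> Sqsn; rewrite /=; case: asboolP => [Sn|_].
    by have [] := upP (qs n, n) Sqsn Sn.
  by have [] := upP (qs n, qs n) Sqsn Sqsn.
have qs_S n : S (qs n) by elim: n => [//|n IHn]; case: (qs_next n IHn).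
exists qs; split => // [n|k Sk]; first by case: (qs_next n (qs_S n)).
by rewrite /=; case: asboolP => // _; have [] := upP (qs k, k) (qs_S k) Sk.
Qed.

Record quad (M : Type) := Quad { qa1 : M; qa2 : M; qb1 : M; qb2 : M }.

Section Quads.
Variables (M : Type) (le : M -> M -> Prop).
Hypotheses (le_refl : forall a, le a a)
           (le_trans : forall a b c, le a b -> le b c -> le a c).

Definition quad_le (D E : quad M) :=
  [/\ le (qa1 D) (qa1 E), le (qa2 D) (qa2 E), le (qb1 D) (qb1 E) & le (qb2 D) (qb2 E)].

Definition quad_way_below (D E : quad M) :=
  [/\ way_below le (qa1 D) (qa1 E), way_below le (qa2 D) (qa2 E),
      way_below le (qb1 D) (qb1 E) & way_below le (qb2 D) (qb2 E)].

Definition quad_admissible (X : quad M) :=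
  [/\ le (qa1 X) (qb1 X), le (qa1 X) (qb2 X), le (qa2 X) (qb1 X) & le (qa2 X) (qb2 X)].

Definition in_quad_interval (X : quad M) x :=
  [/\ le (qa1 X) x, le (qa2 X) x, le x (qb1 X) & le x (qb2 X)].

Lemma quad_le_trans D E F : quad_le D E -> quad_le E F -> quad_le D F.
Proof.
case=> [le1 le2 le3 le4] [le1' le2' le3' le4'].
by split; [apply: le_trans le1 le1'|apply: le_trans le2 le2'|
           apply: le_trans le3 le3'|apply: le_trans le4 le4'].
Qed.

Hypothesis approx : forall a, exists an : nat -> M,
  (forall n, way_below le (an n) (an n.+1)) /\ is_sup le an a.

Lemma quad_way_below_exists X : exists W, quad_way_below W X.
Proof.
have [w1 w1X] := way_below_exists le_refl le_trans approx (qa1 X).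
have [w2 w2X] := way_below_exists le_refl le_trans approx (qa2 X).
have [w3 w3X] := way_below_exists le_refl le_trans approx (qb1 X).
have [w4 w4X] := way_below_exists le_refl le_trans approx (qb2 X).
by exists (Quad w1 w2 w3 w4).
Qed.

Lemma quad_way_below_directed U V X :
  quad_way_below U X -> quad_way_below V X ->
  exists W, [/\ quad_le U W, quad_le V W & quad_way_below W X].
Proof.
case=> [u1 u2 u3 u4] [v1 v2 v3 v4].
have [w1 [uw1 vw1 w1X]] := way_below_directed le_refl le_trans approx u1 v1.
have [w2 [uw2 vw2 w2X]] := way_below_directed le_refl le_trans approx u2 v2.
have [w3 [uw3 vw3 w3X]] := way_below_directed le_refl le_trans approx u3 v3.
have [w4 [uw4 vw4 w4X]] := way_below_directed le_refl le_trans approx u4 v4.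
by exists (Quad w1 w2 w3 w4).
Qed.

Definition quad_seq_dense (D : nat -> quad M) :=
  forall X W, quad_admissible X -> quad_way_below W X ->
    exists2 q, quad_way_below (D q) X & quad_le W (D q).

Section CountableBase.
Variable B : nat -> option M.
Hypothesis B_base : forall a' a, way_below le a' a ->
  exists n b, B n = Some b /\ le a' b /\ way_below le b a.

Lemma base_upper_bound u1 u2 u3 a :
  way_below le u1 a -> way_below le u2 a -> way_below le u3 a ->
  exists n b, [/\ B n = Some b, le u1 b, le u2 b, le u3 b & way_below le b a].
Proof.
move=> u1a u2a u3a.
have [v [u1v u2v va]] := way_below_directed le_refl le_trans approx u1a u2a.
have [w [vw u3w wa]] := way_below_directed le_refl le_trans approx va u3a.
have [n [b [Bn [wb ba]]]] := B_base wa.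
exists n, b; split => //; first by apply: le_trans u1v (le_trans vw wb).
- by apply: le_trans u2v (le_trans vw wb).
- by apply: le_trans u3w wb.
Qed.

Definition base_quad (q : nat) : option (quad M) :=
  if @unpickle (nat * nat * nat * nat)%type q is Some (n1, n2, n3, n4) then
    if (B n1, B n2, B n3, B n4) is (Some a1, Some a2, Some b1, Some b2)
    then Some (Quad a1 a2 b1 b2) else None
  else None.

Lemma base_quad_dense X W : quad_admissible X -> quad_way_below W X ->
  exists q E, [/\ base_quad q = Some E, quad_admissible E,
                  quad_way_below E X & quad_le W E].
Proof.
case=> [X11 X12 X21 X22] [W1 W2 W3 W4].
have [n1 [a1 [Bn1 [Wa1 a1X]]]] := B_base W1.
have [n2 [a2 [Bn2 [Wa2 a2X]]]] := B_base W2.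
have [n3 [b1 [Bn3 Wb1 a1b1 a2b1 b1X]]] := base_upper_bound W3
  (way_below_le_trans le_trans a1X X11) (way_below_le_trans le_trans a2X X21).
have [n4 [b2 [Bn4 Wb2 a1b2 a2b2 b2X]]] := base_upper_bound W4
  (way_below_le_trans le_trans a1X X12) (way_below_le_trans le_trans a2X X22).
exists (pickle (n1, n2, n3, n4)), (Quad a1 a2 b1 b2).
by rewrite /base_quad pickleK Bn1 Bn2 Bn3 Bn4.
Qed.

Lemma exists_dense_quad_seq (m0 : M) : exists D : nat -> quad M,
  (forall q, quad_admissible (D q)) /\ quad_seq_dense D.
Proof.
pose D0 := Quad m0 m0 m0 m0.
have D0_adm : quad_admissible D0 by split.
pose D q := if base_quad q is Some E then
              if pselect (quad_admissible E) then E else D0 else D0.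
exists D; split.
  by move=> q; rewrite /D; case: base_quad => // E; case: pselect.
move=> X W X_adm WX; have [q [E [qE E_adm EX WE]]] := base_quad_dense X_adm WX.
by exists q; rewrite /D qE; case: pselect.
Qed.

End CountableBase.

Section MonotoneSelection.
Hypothesis interp : interpolation le.
Variable D : nat -> quad M.
Hypothesis D_adm : forall q, quad_admissible (D q).

Definition image_upto (P : nat -> Prop) (c : nat -> M) n :=
  List.map c (List.filter (fun k => `[< P k >]) (List.seq 0 n)).

Lemma In_image_upto (P : nat -> Prop) c n x :
  List.In x (image_upto P c n) <-> exists2 k, (k < n)%N /\ P k & x = c k.
Proof.
rewrite List.in_map_iff; split.
  case=> k [<- /List.filter_In [/List.in_seq [_ /ltP kn] /asboolP Pk]].
  by exists k.
case=> k [kn Pk] ->; exists k; split => //; apply/List.filter_In.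
by split; [apply/List.in_seq; split; [apply/leP|apply/ltP]|apply/asboolP].
Qed.

Definition monotone_selection_upto (c : nat -> M) n :=
  (forall k, (k < n)%N -> in_quad_interval (D k) (c k)) /\
  (forall k l, (k < n)%N -> (l < n)%N -> quad_le (D k) (D l) -> le (c k) (c l)).

Lemma monotone_selection_next c n : monotone_selection_upto c n ->
  exists x, [/\ in_quad_interval (D n) x,
    forall k, (k < n)%N -> quad_le (D k) (D n) -> le (c k) x &
    forall k, (k < n)%N -> quad_le (D n) (D k) -> le x (c k)].
Proof.
move=> [c_in c_mono]; have [a1b1 a1b2 a2b1 a2b2] := D_adm n.
pose ls := image_upto (fun k => quad_le (D k) (D n)) c n.
pose us := image_upto (fun k => quad_le (D n) (D k)) c n.
have [|x [lx xu]] := interpolation_seq le_refl le_trans interp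
  (l0 := qa1 (D n)) (u0 := qb1 (D n)) (ls := qa2 (D n) :: ls) (us := qb2 (D n) :: us).
  move=> l u /= l_low; have [b1 b2 lc] : [/\ le l (qb1 (D n)), le l (qb2 (D n)) &
      forall k, (k < n)%N -> quad_le (D n) (D k) -> le l (c k)].
    case: l_low => [<-|[<-|/In_image_upto [k [kn Dkn] ->]]].
    - split=> // k kn [Dnk1 _ _ _].
      by have [ck1 _ _ _] := c_in k kn; apply: le_trans Dnk1 ck1.
    - split=> // k kn [_ Dnk2 _ _].
      by have [_ ck2 _ _] := c_in k kn; apply: le_trans Dnk2 ck2.
    have [_ _ ck3 ck4] := c_in k kn; have [_ _ Dkn3 Dkn4] := Dkn.
    split; [exact: le_trans ck3 Dkn3|exact: le_trans ck4 Dkn4|].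
    by move=> k' k'n Dnk'; apply: c_mono kn k'n (quad_le_trans Dkn Dnk').
  by case=> [<-|[<-|/In_image_upto [k [kn Dnk] ->]]] //; apply: lc.
exists x; split.
- by split; [apply: lx; left|apply: lx; right; left|apply: xu; left|apply: xu; right; left].
- by move=> k kn Dkn; apply: lx; right; right; apply/In_image_upto; exists k.
- by move=> k kn Dnk; apply: xu; right; right; apply/In_image_upto; exists k.
Qed.

Lemma monotone_selection_step c n : monotone_selection_upto c n ->
  exists x, monotone_selection_upto (fun i => if i == n then x else c i) n.+1.
Proof.
move=> c_sel; have [x [x_in cx xc]] := monotone_selection_next c_sel.
have [c_in c_mono] := c_sel; exists x; split.
  move=> k; rewrite ltnS leq_eqVlt => /predU1P[->|kn]; first by rewrite eqxx.
  by rewrite (ltn_eqF kn); apply: c_in.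
move=> k l /ltnSE; rewrite leq_eqVlt => /predU1P[->|kn] /ltnSE;
  rewrite leq_eqVlt => /predU1P[->|ln]; rewrite ?eqxx ?(ltn_eqF kn) ?(ltn_eqF ln) => Dkl.
- exact: le_refl.
- exact: xc.
- exact: cx.
- exact: c_mono.
Qed.

Lemma monotone_selection : exists c : nat -> M,
  (forall k, in_quad_interval (D k) (c k)) /\
  (forall k l, quad_le (D k) (D l) -> le (c k) (c l)).
Proof.
have /choice[step c_step] : forall cn : (nat -> M) * nat, exists x,
    monotone_selection_upto cn.1 cn.2 ->
    monotone_selection_upto (fun i => if i == cn.2 then x else cn.1 i) cn.2.+1.
  move=> [c n]; have [c_sel|] := pselect (monotone_selection_upto c n).
    by have [x] := monotone_selection_step c_sel; exists x.
  by exists (qa1 (D 0%N)).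
pose cs := fix cs n := if n is k.+1 then
  (fun i => if i == k then step (cs k, k) else cs k i) else fun=> qa1 (D 0%N).
have cs_sel n : monotone_selection_upto (cs n) n.
  by elim: n => [|n IHn]; [by split|exact: (c_step (cs n, n))].
have cs_stable m k : (k < m)%N -> cs m k = cs k.+1 k.
  elim: m => [//|m IHm]; rewrite ltnS leq_eqVlt => /predU1P[->//|km].
  by rewrite /= (ltn_eqF km) IHm.
exists (fun k => cs k.+1 k); split.
  by move=> k; apply: (cs_sel k.+1).1.
move=> k l Dkl; pose m := (maxn k l).+1.
have km : (k < m)%N by rewrite ltnS leq_maxl.
have lm : (l < m)%N by rewrite ltnS leq_maxr.
by rewrite -(cs_stable m k km) -(cs_stable m l lm); apply: (cs_sel m).2.
Qed.

End MonotoneSelection.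

Section QuadSup.
Hypothesis sups : forall b, incr_seq le b -> exists s, is_sup le b s.
Variables (D : nat -> quad M) (c : nat -> M).
Hypotheses (D_dense : quad_seq_dense D)
           (c_in : forall k, in_quad_interval (D k) (c k))
           (c_mono : forall k l, quad_le (D k) (D l) -> le (c k) (c l)).

Definition quad_sup_spec X y := [/\ in_quad_interval X y,
  forall q, quad_way_below (D q) X -> le (c q) y &
  forall a, way_below le a y -> exists2 q, quad_way_below (D q) X & le a (c q)].

Lemma quad_sup X : quad_admissible X -> exists y, quad_sup_spec X y.
Proof.
move=> X_adm; have [W WX] := quad_way_below_exists X.
have [q0 q0X _] := D_dense X_adm WX.
have [|qs [qsX qs_incr qs_cof]] := directed_cofinal_chain
  (S := fun q => quad_way_below (D q) X) (r := fun k l => quad_le (D k) (D l)) q0X.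
  move=> p q pX qX; have [V [pV qV VX]] := quad_way_below_directed pX qX.
  have [s sX Vs] := D_dense X_adm VX.
  by exists s; split => //; apply: quad_le_trans Vs.
have cqs_incr : incr_seq le (c \o qs) by move=> n; apply: c_mono.
have [h [cqs_h h_lub]] := sups cqs_incr.
have c_h q : quad_way_below (D q) X -> le (c q) h.
  by move=> qX; apply: le_trans (c_mono (qs_cof q qX)) (cqs_h q.+1).
exists h; split => //; last first.
  move=> a ah; have [n a_cqs] := ah _ h cqs_incr (conj cqs_h h_lub) (le_refl h).
  by exists (qs n).
case: WX => [W1 W2 W3 W4]; split.
- apply: (le_of_way_below le_refl le_trans approx) => x xX.
  have [q qX [xq _ _ _]] :=
    D_dense (W := Quad x (qa2 W) (qb1 W) (qb2 W)) X_adm (And4 xX W2 W3 W4).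
  by have [cq1 _ _ _] := c_in q; apply: le_trans xq (le_trans cq1 (c_h q qX)).
- apply: (le_of_way_below le_refl le_trans approx) => x xX.
  have [q qX [_ xq _ _]] :=
    D_dense (W := Quad (qa1 W) x (qb1 W) (qb2 W)) X_adm (And4 W1 xX W3 W4).
  by have [_ cq2 _ _] := c_in q; apply: le_trans xq (le_trans cq2 (c_h q qX)).
- apply: h_lub => n; have [_ _ cqs3 _] := c_in (qs n); have [_ _ qsX3 _] := qsX n.
  exact: le_trans cqs3 (way_below_le le_refl qsX3).
- apply: h_lub => n; have [_ _ _ cqs4] := c_in (qs n); have [_ _ _ qsX4] := qsX n.
  exact: le_trans cqs4 (way_below_le le_refl qsX4).
Qed.

Lemma exists_quad_sup_map : exists h : quad M -> M,
  forall X, quad_admissible X -> quad_sup_spec X (h X).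
Proof.
have /choice[h hP] X : exists y, quad_admissible X -> quad_sup_spec X y.
  have [X_adm|nX] := pselect (quad_admissible X); last by exists (qa1 X) => /nX.
  by have [y yX] := quad_sup X_adm; exists y.
by exists h.
Qed.

End QuadSup.
End Quads.

Lemma open_quad_way_below (T : topologicalType) (M : Type) (le : M -> M -> Prop)
    (f1 f2 g1 g2 : T -> M) (E : quad M) :
  lsc le f1 -> lsc le f2 -> lsc le g1 -> lsc le g2 ->
  open [set t | quad_way_below le E (Quad (f1 t) (f2 t) (g1 t) (g2 t))].
Proof.
move=> lf1 lf2 lg1 lg2.
have -> : [set t | quad_way_below le E (Quad (f1 t) (f2 t) (g1 t) (g2 t))] =
    [set t | way_below le (qa1 E) (f1 t)] `&` [set t | way_below le (qa2 E) (f2 t)]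
    `&` [set t | way_below le (qb1 E) (g1 t)] `&` [set t | way_below le (qb2 E) (g2 t)].
  by apply/seteqP; split=> t /=; [case|move=> [[[]]]].
by apply: openI; [apply: openI; [apply: openI|]|].
Qed.

Theorem proposition3p5 (M : Type) (add : M -> M -> M) (le : M -> M -> Prop)
  (HCu : is_Cu add le) (Hcb : countably_based le) (Hint : interpolation le)
  (R : realType) (X : pseudoMetricType R)
  (Hmet : hausdorff_space X) (Hcpt : compact [set: X])
  (Hdim : finite_dimensional X) :
  lsc_interpolation X le.
Proof.
case: HCu => [[[le_refl _ le_trans] _] sups approx _ _]; have [B B_base] := Hcb.
move=> f1 f2 g1 g2 lf1 lf2 lg1 lg2 f1g1 f1g2 f2g1 f2g2.
have [[t0 _]|X0] := pselect (exists t : X, True); last first.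
  by exists f1; split=> // t; case: X0; exists t.
have [D [D_adm D_dense]] :=
  exists_dense_quad_seq le_refl le_trans approx B_base (f1 t0).
have [c [c_in c_mono]] := monotone_selection le_refl le_trans Hint D_adm.
have [h hP] := exists_quad_sup_map le_refl le_trans approx sups D_dense c_in c_mono.
pose F t := Quad (f1 t) (f2 t) (g1 t) (g2 t).
have F_adm t : quad_admissible le (F t).
  by split; [apply: f1g1|apply: f1g2|apply: f2g1|apply: f2g2].
exists (h \o F); split=> [a|t]; last by have [[]] := hP _ (F_adm t); split.
rewrite openE => t /= aht; have [_ _ h_approx] := hP _ (F_adm t).
have [a' aa' a'ht] := way_below_interpolate le_refl le_trans approx aht.
have [q qFt a'cq] := h_approx a' a'ht.
rewrite /interior nbhsE; exists [set s | quad_way_below le (D q) (F s)].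
  by split=> //; apply: open_quad_way_below.
move=> s qFs /=; have [_ cq_h _] := hP _ (F_adm s).
exact (way_below_le_trans le_trans aa' (le_trans _ _ _ a'cq (cq_h q qFs))).
Qed.
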